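(* The category $\mathbb S^{\mathbb P}_r$, with sum $\oplus$, unit $0$, symmetries $\sigma$ and trace operator $\mathrm{tr}$, is a traced symmetric monoidal category.
   Context: Notation: $[k]=\{1,\dots,k\}$ ($[0]=\emptyset$); $T(X)=X+\mathbb R\times X+\{\exists^*,\forall^*\}$ (disjoint union); composition in diagrammatic order. $\mathbb S^{\mathbb P}_r$ has natural numbers as objects; an arrow $f:m\to n$ is a function $f:[m]\to T([n])$ satisfying realizability: if $f(i)=k\in[n]$ then for every $j\in[m]\setminus\{i\}$, $f(j)\ne k$ and $f(j)\ne(r,k)$ for all $r\in\mathbb R$. Composition of $f:m\to l$ and $g:l\to n$: $(f;g)(i)=f(i)$ if $f(i)\in\{\exists^*,\forall^*\}$; $=g(j)$ if $f(i)=j\in[l]$; $=g(j)$ if $f(i)=(r,j)$ and $g(j)\in\{\exists^*,\forall^*\}$; $=(r,k)$ if $f(i)=(r,j)$ and $g(j)=k\in[n]$; $=(r+r',k)$ if $f(i)=(r,j)$ and $g(j)=(r',k)$. Identity $\mathrm{id}_m(i)=i$. Symmetry $\sigma_{m,n}:m+n\to n+m$, $\sigma_{m,n}(i)=n+i$ for $i\le m$, $\sigma_{m,n}(m+j)=j$. Sum of $f:m\to n$ and $g:k\to l$: $(f\oplus g)(i)=f(i)$ for $i\in[m]$, and $(f\oplus g)(m+i)$ is $g(i)$ with its element $j\in[l]$ (if any) replaced by $n+j$. Trace of $f:l+m\to l+n$: for $i\in[m]$ define a sequence $v$ by $v_0=l+i$ and: if $j=0$ or $v_j\in[l]$ then $v_{j+1}=f(v_j)$;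 if $v_j=(r,k)$ with $k\in[l]$ then $v_{j+1}=f(k)$; otherwise ($j\ge1$ and $v_j\in\{l+1,..,l+n\}\cup\mathbb R\times\{l+1,..,l+n\}\cup\{\exists^*,\forall^*\}$) the sequence stops. If $v=(v_0,\dots,v_K)$ is finite, let $S$ be the sum of the first components of all $v_j\in\mathbb R\times[l+n]$, $1\le j\le K$; then $\mathrm{tr}^l_{m,n}(f)(i)=v_K$ if $v_K\in\{\exists^*,\forall^*\}$; $=k$ if $v_K=l+k$ and $v_j\in[l]$ for all $1\le j<K$; $=(S,k)$ if $v_K=l+k$ and some $v_j$, $1\le j<K$, lies in $\mathbb R\times[l]$; $=(S,k)$ if $v_K=(r,l+k)$. If $v$ is infinite, let $w'_1,w'_2,\dots$ be the first components, in order, of the (infinitely many) entries of $v$ lying in $\mathbb R\times[l]$; then $\mathrm{tr}^l_{m,n}(f)(i)=\exists^*$ if $\liminf_{N\to\infty}\frac1N\sum_{t=1}^Nw'_t\ge0$, and $\forall^*$ otherwise. *)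

From Stdlib Require Import Reals Arith List ClassicalEpsilon.
From Coquelicot Require Import Coquelicot.
Open Scope R_scope.

(* Conventions: everything is 0-based.  The object n stands for the finite set
   {0,..,n-1} (the paper's [n] = {1,..,n}, shifted by one).  An arrow f : m -> n
   is represented by a function  f : nat -> Tt nat  of which only the values on
   i < m matter; [Arr m n f] says these values are in T({0..n-1}) and that f is
   realizable.  Equality of arrows m -> n is [eqA m] (pointwise on {0..m-1}). *)

(* T(X) = X + R x X + {exists*, forall*} *)
Inductive Tt (X : Type) : Type :=
| Pt : X -> Tt X
| Wt : R -> X -> Tt X
| Ex : Tt X
| Fa : Tt X.
Arguments Pt {X} _.
Arguments Wt {X} _ _.
Arguments Ex {X}.
Arguments Fa {X}.

Definition labels_lt (n : nat) (v : Tt nat) : Prop :=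
  match v with Pt k => (k < n)%nat | Wt _ k => (k < n)%nat | _ => True end.

Definition realizable (m : nat) (f : nat -> Tt nat) : Prop :=
  forall i k, (i < m)%nat -> f i = Pt k ->
    forall j, (j < m)%nat -> j <> i -> f j <> Pt k /\ (forall r, f j <> Wt r k).

Definition Arr (m n : nat) (f : nat -> Tt nat) : Prop :=
  (forall i, (i < m)%nat -> labels_lt n (f i)) /\ realizable m f.

Definition eqA (m : nat) (f g : nat -> Tt nat) : Prop :=
  forall i, (i < m)%nat -> f i = g i.

Definition idA : nat -> Tt nat := fun i => Pt i.

(* composition f ; g (diagrammatic order) *)
Definition comp (f g : nat -> Tt nat) : nat -> Tt nat := fun i =>
  match f i with
  | Ex => Ex
  | Fa => Fa
  | Pt j => g j
  | Wt r j =>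
      match g j with
      | Ex => Ex
      | Fa => Fa
      | Pt k => Wt r k
      | Wt r' k => Wt (r + r') k
      end
  end.

Definition shiftT (n : nat) (v : Tt nat) : Tt nat :=
  match v with Pt j => Pt (n + j)%nat | Wt r j => Wt r (n + j)%nat | Ex => Ex | Fa => Fa end.

Definition sum (m n : nat) (f g : nat -> Tt nat) : nat -> Tt nat := fun i =>
  if (i <? m)%nat then f i else shiftT n (g (i - m)%nat).

Definition sym (m n : nat) : nat -> Tt nat := fun i =>
  if (i <? m)%nat then Pt (n + i)%nat else Pt (i - m)%nat.

Definition cont (l : nat) (v : Tt nat) : bool :=
  match v with Pt k => (k <? l)%nat | Wt _ k => (k <? l)%nat | _ => false end.

Definition nxt (f : nat -> Tt nat) (v : Tt nat) : Tt nat :=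
  match v with Pt k => f k | Wt _ k => f k | Ex => Ex | Fa => Fa end.

(* the sequence v_0, v_1, ... for input i (0-based), made total by staying
   constant once it has stopped *)
Fixpoint vseq (l : nat) (f : nat -> Tt nat) (i : nat) (j : nat) : Tt nat :=
  match j with
  | O => Pt (l + i)%nat
  | S j' => let u := vseq l f i j' in
            if (Nat.eqb j' 0 || cont l u)%bool then nxt f u else u
  end.

Definition isW (v : Tt nat) : bool := match v with Wt _ _ => true | _ => false end.
Definition weight (v : Tt nat) : R := match v with Wt r _ => r | _ => 0 end.

Definition finite_seq (l : nat) (f : nat -> Tt nat) (i : nat) : Prop :=
  exists K, (1 <= K)%nat /\ cont l (vseq l f i K) = false.

Definition stopK (l : nat) (f : nat -> Tt nat) (i : nat) : nat :=
  epsilon (inhabits O) (fun K => (1 <= K)%nat /\ cont l (vseq l f i K) = false /\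
     forall j, (1 <= j)%nat -> (j < K)%nat -> cont l (vseq l f i j) = true).

Fixpoint rsum (g : nat -> R) (a c : nat) : R :=
  match c with O => 0 | S c' => g a + rsum g (S a) c' end.

Definition nextW (l : nat) (f : nat -> Tt nat) (i : nat) (p : nat) : nat :=
  epsilon (inhabits O) (fun j => (p < j)%nat /\ isW (vseq l f i j) = true /\
     forall k, (p < k)%nat -> (k < j)%nat -> isW (vseq l f i k) = false).

Fixpoint posW (l : nat) (f : nat -> Tt nat) (i : nat) (t : nat) : nat :=
  match t with O => nextW l f i O | S t' => nextW l f i (posW l f i t') end.

Definition wprime (l : nat) (f : nat -> Tt nat) (i : nat) (t : nat) : R :=
  weight (vseq l f i (posW l f i t)).

(* (1/N) sum_{t=1}^N w'_t  (N >= 1; value at N = 0 irrelevant for the liminf) *)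
Definition avgW (l : nat) (f : nat -> Tt nat) (i : nat) (N : nat) : R :=
  match N with O => 0 | _ => rsum (wprime l f i) 0 N / INR N end.

Definition tr (l : nat) (f : nat -> Tt nat) : nat -> Tt nat := fun i =>
  if excluded_middle_informative (finite_seq l f i) then
    let K := stopK l f i in
    let S := rsum (fun j => weight (vseq l f i j)) 1 K in
    match vseq l f i K with
    | Ex => Ex
    | Fa => Fa
    | Pt k => if existsb (fun j => isW (vseq l f i j)) (seq 1 (K - 1))
              then Wt S (k - l)%nat else Pt (k - l)%nat
    | Wt _ k => Wt S (k - l)%nat
    end
  else
    if Rbar_le_dec (Finite 0) (LimInf_seq (avgW l f i)) then Ex else Fa.

Definition well_defined_ops : Prop :=
  (forall m, Arr m m idA) /\
  (forall m l n f g, Arr m l f -> Arr l n g -> Arr m n (comp f g)) /\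
  (forall m n k l' f g, Arr m n f -> Arr k l' g -> Arr (m + k) (n + l') (sum m n f g)) /\
  (forall m n, Arr (m + n) (n + m) (sym m n)) /\
  (forall l m n f, Arr (l + m) (l + n) f -> Arr m n (tr l f)).

Definition category_axioms : Prop :=
  (forall m n f, Arr m n f -> eqA m (comp idA f) f) /\
  (forall m n f, Arr m n f -> eqA m (comp f idA) f) /\
  (forall m n p q f g h, Arr m n f -> Arr n p g -> Arr p q h ->
     eqA m (comp (comp f g) h) (comp f (comp g h))).

Definition monoidal_axioms : Prop :=
  (forall m n, eqA (m + n) (sum m m idA idA) idA) /\
  (forall m n p m' n' p' f g f' g',
     Arr m n f -> Arr n p g -> Arr m' n' f' -> Arr n' p' g' ->
     eqA (m + m') (sum m p (comp f g) (comp f' g'))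
                  (comp (sum m n f f') (sum n p g g'))) /\
  (forall m n m' n' m'' n'' f g h,
     Arr m n f -> Arr m' n' g -> Arr m'' n'' h ->
     eqA (m + m' + m'') (sum (m + m') (n + n') (sum m n f g) h)
                        (sum m n f (sum m' n' g h))) /\
  (forall m n f, Arr m n f -> eqA m (sum 0 0 idA f) f) /\
  (forall m n f, Arr m n f -> eqA m (sum m n f idA) f).

Definition symmetry_axioms : Prop :=
  (forall m n m' n' f g, Arr m n f -> Arr m' n' g ->
     eqA (m + m') (comp (sum m n f g) (sym n n')) (comp (sym m m') (sum m' n' g f))) /\
  (forall m n, eqA (m + n) (comp (sym m n) (sym n m)) idA) /\
  (forall m n k, eqA (m + (n + k)) (sym m (n + k))
                     (comp (sum (m + n) (n + m) (sym m n) idA) (sum n n idA (sym m k)))).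

Definition trace_axioms : Prop :=
  (forall l m n m' n' f g h, Arr m' m g -> Arr (l + m) (l + n) f -> Arr n n' h ->
     eqA m' (tr l (comp (comp (sum l l idA g) f) (sum l l idA h)))
            (comp (comp g (tr l f)) h)) /\
  (forall l l' m n f k, Arr (l + m) (l' + n) f -> Arr l' l k ->
     eqA m (tr l (comp f (sum l' l k idA))) (tr l' (comp (sum l' l k idA) f))) /\
  (forall m n f, Arr m n f -> eqA m (tr 0 f) f) /\
  (forall l l' m n f, Arr (l + l' + m) (l + l' + n) f ->
     eqA m (tr (l + l') f) (tr l' (tr l f))) /\
  (forall l m n m' n' f g, Arr (l + m) (l + n) f -> Arr m' n' g ->
     eqA (m + m') (sum m n (tr l f) g) (tr l (sum (l + m) (l + n) f g))) /\
  (forall m, eqA m (tr m (sym m m)) idA).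

Definition traced_symmetric_monoidal : Prop :=
  well_defined_ops /\ category_axioms /\ monoidal_axioms /\
  symmetry_axioms /\ trace_axioms.

(* Arrows are Kleisli maps of the monad [Tt] (weights add up along composition, [exists*] and
   [forall*] absorb), from which the category, monoidal and symmetry laws follow directly.  A finite run is captured by the inductive relation
   [exits], and on finite runs each trace axiom is an induction on runs.  An infinite run is
   eventually periodic by the pigeonhole principle, and realizability forces a weighted entry into
   every period; so its partial weight sums drift linearly, and the liminf of their averages is
   nonnegative iff the partial sums are bounded below.  For infinite runs each trace axiom then
   compares two runs whose partial sums stay within bounded distance of each other, or agree
   along a cofinal subsequence. *)

From Stdlib Require Import Reals Arith List Lia Lra ClassicalEpsilon Classical FunctionalExtensionality.
From Coquelicot Require Import Coquelicot.
Open Scope R_scope.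

Implicit Types (f g h : nat -> Tt nat) (x y : Tt nat) (r s : R).

(** * Kleisli structure, arrows and the symmetric monoidal laws *)

Definition add_weight r x : Tt nat :=
  match x with Pt k => Wt r k | Wt r' k => Wt (r + r') k | Ex => Ex | Fa => Fa end.

(* Kleisli extension for [Tt]; [comp] is Kleisli composition ([comp_bindT]). *)
Definition bindT x g : Tt nat :=
  match x with Pt j => g j | Wt r j => add_weight r (g j) | Ex => Ex | Fa => Fa end.

Definition labelled x : Prop := match x with Pt _ | Wt _ _ => True | _ => False end.

Definition label x : nat := match x with Pt k | Wt _ k => k | _ => O end.

Definition targets (k : nat) x : Prop := x = Pt k \/ exists r, x = Wt r k.

Definition carry x y : Tt nat := match x with Wt r _ => add_weight r y | _ => y end.

Lemma comp_bindT f g i : comp f g i = bindT (f i) g.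
Proof. unfold comp, bindT. destruct (f i); auto. Qed.

Lemma add_weightA r s x : add_weight (r + s) x = add_weight r (add_weight s x).
Proof. destruct x; simpl; auto. f_equal; ring. Qed.

Lemma bindT_add_weight r x g : bindT (add_weight r x) g = add_weight r (bindT x g).
Proof. destruct x; simpl; auto. apply add_weightA. Qed.

Lemma bindT_assoc x f g : bindT (bindT x f) g = bindT x (fun j => bindT (f j) g).
Proof. destruct x; simpl; auto. apply bindT_add_weight. Qed.

Lemma bindT_labelled x g : labelled x -> bindT x g = carry x (g (label x)).
Proof. destruct x; simpl; tauto. Qed.

Lemma bindT_ext n x g g' :
  labels_lt n x -> (forall j, (j < n)%nat -> g j = g' j) -> bindT x g = bindT x g'.
Proof. destruct x; simpl; intros Hx H; auto; rewrite H; auto. Qed.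

Lemma shiftT_add_weight n r x : shiftT n (add_weight r x) = add_weight r (shiftT n x).
Proof. destruct x; reflexivity. Qed.

Lemma bindT_shiftT n x g : bindT (shiftT n x) g = bindT x (fun j => g (n + j)%nat).
Proof. destruct x; reflexivity. Qed.

Lemma shiftT_bindT n x g : shiftT n (bindT x g) = bindT x (fun j => shiftT n (g j)).
Proof. destruct x; simpl; auto. apply shiftT_add_weight. Qed.

Lemma shiftT_shiftT a b x : shiftT a (shiftT b x) = shiftT (a + b) x.
Proof. destruct x; simpl; auto; f_equal; lia. Qed.

Lemma shiftT0 x : shiftT 0 x = x.
Proof. destruct x; reflexivity. Qed.

Lemma labels_lt_add_weight n r x : labels_lt n x -> labels_lt n (add_weight r x).
Proof. destruct x; simpl; auto. Qed.

Lemma labels_lt_bindT l n x g :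
  labels_lt l x -> (forall j, (j < l)%nat -> labels_lt n (g j)) -> labels_lt n (bindT x g).
Proof. destruct x; simpl; intros; auto. apply labels_lt_add_weight; auto. Qed.

Lemma labels_lt_shiftT n k x : labels_lt k x -> labels_lt (n + k) (shiftT n x).
Proof. destruct x; simpl; auto; lia. Qed.

Lemma labels_lt_targets n k x : labels_lt n x -> targets k x -> (k < n)%nat.
Proof. intros H [->|[r ->]]; exact H. Qed.

Lemma targets_add_weight k r x : targets k (add_weight r x) -> targets k x.
Proof. unfold targets; destruct x; simpl; intros [H|[s H]]; inversion H; subst; eauto. Qed.

Lemma targets_shiftT k n x : targets k (shiftT n x) -> (n <= k)%nat /\ targets (k - n) x.
Proof.
  unfold targets; destruct x; simpl; intros [H|[s H]]; inversion H; subst;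
    (split; [lia|]); replace (n + n0 - n)%nat with n0 by lia; eauto.
Qed.

Lemma bindT_eq_Pt x g k : bindT x g = Pt k -> exists a, x = Pt a /\ g a = Pt k.
Proof. destruct x; simpl; intros H; try discriminate; eauto. destruct (g n); discriminate. Qed.

Lemma targets_bindT k x g : targets k (bindT x g) -> exists a, targets a x /\ targets k (g a).
Proof.
  destruct x; simpl; intros H.
  - exists n; split; auto. left; auto.
  - exists n; split; [right; eauto|]. eapply targets_add_weight; eauto.
  - destruct H as [H|[r H]]; discriminate.
  - destruct H as [H|[r H]]; discriminate.
Qed.

Lemma realizableP m f : realizable m f <->
  forall i j k, (i < m)%nat -> (j < m)%nat -> f i = Pt k -> targets k (f j) -> j = i.
Proof.
  split.
  - intros Hf i j k Hi Hj Hfik Hfj. destruct (Nat.eq_dec j i) as [|Hne]; auto.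
    destruct (Hf i k Hi Hfik j Hj Hne) as [H1 H2].
    destruct Hfj as [E|[r E]]; [destruct (H1 E)|destruct (H2 r E)].
  - intros Hf i k Hi Hfik j Hj Hne.
    split; [intros E|intros r E]; apply Hne; apply (Hf i j k); auto; [left|right; exists r]; auto.
Qed.

Lemma id_Arr m : Arr m m idA.
Proof.
  split; [intros i Hi; exact Hi|]. apply realizableP. unfold idA.
  intros i j k _ _ E [H|[r H]]; inversion E; inversion H; congruence.
Qed.

Lemma comp_Arr m l n f g : Arr m l f -> Arr l n g -> Arr m n (comp f g).
Proof.
  intros [Lf Rf] [Lg Rg]. rewrite realizableP in Rf, Rg. split.
  - intros i Hi. rewrite comp_bindT. eapply labels_lt_bindT; eauto.
  - apply realizableP. intros i j k Hi Hj Hfi Hfj. rewrite comp_bindT in Hfi, Hfj.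
    apply bindT_eq_Pt in Hfi as [a [Ha Hga]]. apply targets_bindT in Hfj as [b [Hb Hgb]].
    assert (Hal : (a < l)%nat) by (specialize (Lf i Hi); rewrite Ha in Lf; exact Lf).
    assert (Hbl : (b < l)%nat) by (eapply labels_lt_targets; eauto).
    assert (b = a) by (eapply Rg; eauto). subst b. eapply Rf; eauto.
Qed.

Lemma sum_Arr m n k l f g : Arr m n f -> Arr k l g -> Arr (m + k) (n + l) (sum m n f g).
Proof.
  intros [Lf Rf] [Lg Rg]. rewrite realizableP in Rf, Rg. split.
  - intros i Hi. unfold sum. destruct (Nat.ltb_spec i m).
    + specialize (Lf i H). destruct (f i); simpl in *; auto; lia.
    + apply labels_lt_shiftT. apply Lg. lia.
  - apply realizableP. unfold sum. intros i j c Hi Hj Hfi Hfj.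
    destruct (Nat.ltb_spec i m) as [Qi|Qi], (Nat.ltb_spec j m) as [Qj|Qj].
    + eapply Rf; eauto.
    + specialize (Lf i Qi). rewrite Hfi in Lf. apply targets_shiftT in Hfj. simpl in Lf. lia.
    + assert (c < n)%nat by (eapply labels_lt_targets; eauto).
      destruct (g (i - m)%nat); simpl in Hfi; inversion Hfi; lia.
    + apply targets_shiftT in Hfj as [Hc Hfj].
      destruct (g (i - m)%nat) eqn:E; simpl in Hfi; inversion Hfi; subst.
      replace (n + n0 - n)%nat with n0 in Hfj by lia.
      assert (j - m = i - m)%nat by (eapply Rg; eauto; lia). lia.
Qed.

Lemma sum_lt m n f g i : (i < m)%nat -> sum m n f g i = f i.
Proof. intros H. unfold sum. destruct (Nat.ltb_spec i m); auto; lia. Qed.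

Lemma sum_ge m n f g i : (m <= i)%nat -> sum m n f g i = shiftT n (g (i - m)%nat).
Proof. intros H. unfold sum. destruct (Nat.ltb_spec i m); auto; lia. Qed.

Lemma sum_id_ge m n f i : (m <= i)%nat -> sum m n f idA i = Pt (n + (i - m))%nat.
Proof. intros H. rewrite sum_ge; auto. Qed.

Lemma sym_Arr m n : Arr (m + n) (n + m) (sym m n).
Proof.
  split.
  - intros i Hi. unfold sym. destruct (Nat.ltb_spec i m); simpl; lia.
  - apply realizableP. unfold sym. intros i j k Hi Hj Hfi [Hfj|[r Hfj]];
      destruct (Nat.ltb_spec i m), (Nat.ltb_spec j m); inversion Hfi; inversion Hfj; lia.
Qed.

Lemma category_axioms_hold : category_axioms.
Proof.
  split; [|split].
  - intros m n f _ i _. reflexivity.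
  - intros m n f _ i _. rewrite comp_bindT. destruct (f i); simpl; auto.
  - intros m n p q f g h _ _ _ i _. rewrite !comp_bindT, bindT_assoc.
    apply bindT_ext with (n := S (label (f i))); [destruct (f i); simpl; auto|].
    intros j _. symmetry. apply comp_bindT.
Qed.

Lemma monoidal_axioms_hold : monoidal_axioms.
Proof.
  split; [|split; [|split; [|split]]].
  - intros m n i Hi. unfold sum, idA. destruct (Nat.ltb_spec i m); simpl; auto. f_equal; lia.
  - intros m n p m' n' p' f g f' g' [Lf _] [Lg _] [Lf' _] [Lg' _] i Hi.
    unfold sum. rewrite !comp_bindT. destruct (Nat.ltb_spec i m).
    + apply (bindT_ext n); auto. intros j Hj. destruct (Nat.ltb_spec j n); auto; lia.
    + rewrite bindT_shiftT, shiftT_bindT. apply (bindT_ext n'); [apply Lf'; lia|].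
      intros j Hj. destruct (Nat.ltb_spec (n + j) n); try lia. do 2 f_equal. lia.
  - intros m n m' n' m'' n'' f g h _ _ _ i Hi. unfold sum.
    destruct (Nat.ltb_spec i (m + m')), (Nat.ltb_spec i m), (Nat.ltb_spec (i - m) m'); auto; try lia.
    rewrite shiftT_shiftT. do 2 f_equal. lia.
  - intros m n f _ i Hi. unfold sum. simpl. rewrite shiftT0. f_equal; lia.
  - intros m n f _ i Hi. unfold sum. destruct (Nat.ltb_spec i m); auto; lia.
Qed.

Lemma symmetry_axioms_hold : symmetry_axioms.
Proof.
  split; [|split].
  - intros m n m' n' f g [Lf _] [Lg _] i Hi. rewrite !comp_bindT. unfold sum, sym.
    destruct (Nat.ltb_spec i m) as [Q|Q]; simpl.
    + destruct (Nat.ltb_spec (m' + i) m'); try lia.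
      replace (m' + i - m')%nat with i by lia.
      specialize (Lf i Q). destruct (f i); simpl in *; auto;
        destruct (Nat.ltb_spec n0 n); try lia; auto.
    + destruct (Nat.ltb_spec (i - m) m'); try lia.
      specialize (Lg (i - m)%nat ltac:(lia)). destruct (g (i - m)%nat); simpl in *; auto;
        destruct (Nat.ltb_spec (n + n0) n); try lia;
        replace (n + n0 - n)%nat with n0 by lia; reflexivity.
  - intros m n i Hi. unfold comp, sym, idA.
    destruct (Nat.ltb_spec i m); [destruct (Nat.ltb_spec (n + i) n)|destruct (Nat.ltb_spec (i - m) n)];
      f_equal; lia.
  - intros m n k i Hi. rewrite comp_bindT. unfold sum, sym, idA.
    destruct (Nat.ltb_spec i m), (Nat.ltb_spec i (m + n)); simpl; try lia.
    + destruct (Nat.ltb_spec (n + i) n); try lia. destruct (Nat.ltb_spec (n + i - n) m); try lia.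
      simpl; f_equal; lia.
    + destruct (Nat.ltb_spec (i - m) n); try lia. auto.
    + destruct (Nat.ltb_spec (n + m + (i - (m + n))) n); try lia.
      destruct (Nat.ltb_spec (n + m + (i - (m + n)) - n) m); try lia. simpl; f_equal; lia.
Qed.

(** * Runs of the feedback loop *)

Lemma least_witness (P : nat -> Prop) n : P n -> exists k, P k /\ forall j, (j < k)%nat -> ~ P j.
Proof.
  intros Hn.
  destruct (dec_inh_nat_subset_has_unique_least_element P (fun j => classic (P j)) (ex_intro _ n Hn))
    as [k [[Hk Hmin] _]].
  exists k. split; auto. intros j Hj Pj. specialize (Hmin j Pj). lia.
Qed.

Definition step l f x : Tt nat := if cont l x then nxt f x else x.

Fixpoint run l f x (t : nat) : Tt nat :=
  match t with O => x | S t' => step l f (run l f x t') end.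

Definition diverges l f x : Prop := forall t, cont l (run l f x t) = true.

Definition unshiftT l x : Tt nat :=
  match x with Pt k => Pt (k - l)%nat | Wt r k => Wt r (k - l)%nat | _ => x end.

(* [exits l f x y]: the feedback loop entered with [x] leaves it with result [y]. *)
Inductive exits (l : nat) f : Tt nat -> Tt nat -> Prop :=
| exits_now x : cont l x = false -> exits l f x (unshiftT l x)
| exits_later x y : cont l x = true -> exits l f (f (label x)) y -> exits l f x (carry x y).

Lemma cont_labelled l x : cont l x = true -> labelled x.
Proof. destruct x; simpl; auto; discriminate. Qed.

Lemma cont_label_lt l x : cont l x = true -> (label x < l)%nat.
Proof. destruct x; simpl; intros H; try discriminate; apply Nat.ltb_lt; auto. Qed.

Lemma cont_targets l x : cont l x = true -> targets (label x) x.
Proof. destruct x; simpl; intros H; try discriminate; unfold targets; eauto. Qed.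

Lemma cont_mono l L x : (l <= L)%nat -> cont l x = true -> cont L x = true.
Proof. destruct x; simpl; auto; intros H1 H2; apply Nat.ltb_lt; apply Nat.ltb_lt in H2; lia. Qed.

Lemma step_cont l f x : cont l x = true -> step l f x = f (label x).
Proof. unfold step; intros H; rewrite H. destruct x; simpl in *; auto; discriminate. Qed.

Lemma run_S l f x t : run l f x (S t) = run l f (step l f x) t.
Proof. induction t; simpl; auto. rewrite <- IHt. reflexivity. Qed.

Lemma run_add l f x p t : run l f x (p + t) = run l f (run l f x p) t.
Proof.
  induction t; simpl; [rewrite Nat.add_0_r; auto|].
  rewrite Nat.add_succ_r. simpl. rewrite IHt; auto.
Qed.

Lemma run_S_cont l f x t : cont l (run l f x t) = true -> run l f x (S t) = f (label (run l f x t)).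
Proof. apply step_cont. Qed.

Lemma vseq_run l f i t : vseq l f i (S t) = run l f (f (l + i)%nat) t.
Proof.
  induction t; [reflexivity|].
  change (step l f (vseq l f i (S t)) = step l f (run l f (f (l + i)%nat) t)). rewrite IHt. reflexivity.
Qed.

Lemma run_ext l f f' x t : (forall z, (z < l)%nat -> f z = f' z) -> run l f x t = run l f' x t.
Proof.
  intros H. induction t; simpl; auto. rewrite IHt. unfold step.
  destruct (cont l (run l f' x t)) eqn:E; auto.
  pose proof (cont_label_lt _ _ E). destruct (run l f' x t); simpl in *; auto.
Qed.

Lemma first_stop l f x K : cont l (run l f x K) = false -> exists K0,
  (forall j, (j < K0)%nat -> cont l (run l f x j) = true) /\ cont l (run l f x K0) = false.
Proof.
  intros HK. destruct (least_witness (fun K => cont l (run l f x K) = false) K HK) as [K0 [H0 Hmin]].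
  exists K0. split; auto. intros j Hj.
  destruct (cont l (run l f x j)) eqn:E; auto. exfalso; eapply Hmin; eauto.
Qed.

Lemma exits_functional l f x y1 y2 : exits l f x y1 -> exits l f x y2 -> y1 = y2.
Proof.
  intros H1; revert y2; induction H1; intros y2 H2; inversion H2; subst; auto; try congruence.
  f_equal. auto.
Qed.

Lemma exits_stops l f x y : exits l f x y -> exists K, cont l (run l f x K) = false.
Proof.
  induction 1 as [x C|x y C _ [K HK]]; [exists O; auto|].
  exists (S K). rewrite run_S, step_cont; auto.
Qed.

Lemma stops_exits l f K : forall x, cont l (run l f x K) = false -> exists y, exits l f x y.
Proof.
  induction K; intros x H; [eexists; apply exits_now; auto|].
  destruct (cont l x) eqn:E; [|eexists; apply exits_now; auto].
  rewrite run_S, step_cont in H; auto. destruct (IHK _ H) as [y Hy]. eexists; apply exits_later; eauto.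
Qed.

Lemma exits_or_diverges l f x : (exists y, exits l f x y) \/ diverges l f x.
Proof.
  destruct (classic (exists K, cont l (run l f x K) = false)) as [[K HK]|H].
  - left. eapply stops_exits; eauto.
  - right. intros t. destruct (cont l (run l f x t)) eqn:E; auto. exfalso; eauto.
Qed.

Lemma exits_not_diverges l f x y : exits l f x y -> ~ diverges l f x.
Proof. intros H D. destruct (exits_stops _ _ _ _ H) as [K HK]. rewrite D in HK. discriminate. Qed.

Lemma finite_seq_exits l f i : finite_seq l f i <-> exists y, exits l f (f (l + i)%nat) y.
Proof.
  split.
  - intros [[|K] [H1 H2]]; [lia|]. rewrite vseq_run in H2. eapply stops_exits; eauto.
  - intros [y Hy]. destruct (exits_stops _ _ _ _ Hy) as [K HK].
    exists (S K). rewrite vseq_run. split; auto; lia.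
Qed.

Lemma rsum_ext (g1 g2 : nat -> R) a c :
  (forall j, (a <= j < a + c)%nat -> g1 j = g2 j) -> rsum g1 a c = rsum g2 a c.
Proof.
  revert a; induction c; intros a H; simpl; auto.
  rewrite H, IHc; auto; [intros; apply H|]; lia.
Qed.

Lemma rsum_shift (g : nat -> R) a c : rsum g (S a) c = rsum (fun j => g (S j)) a c.
Proof. revert a; induction c; intros; simpl; auto. rewrite IHc. auto. Qed.

Lemma rsum_add (g : nat -> R) a c d : rsum g a (c + d) = rsum g a c + rsum g (a + c) d.
Proof.
  revert a; induction c; intros a; simpl; [rewrite Nat.add_0_r; ring|].
  rewrite IHc. replace (a + S c)%nat with (S a + c)%nat by lia. ring.
Qed.

Lemma rsum_snoc (g : nat -> R) a c : rsum g a (S c) = rsum g a c + g (a + c)%nat.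
Proof. rewrite <- Nat.add_1_r, rsum_add. simpl. ring. Qed.

Lemma rsum_offset (g : nat -> R) a c : rsum g a c = rsum (fun j => g (a + j)%nat) 0 c.
Proof.
  revert a; induction c; intros a; simpl; auto. rewrite IHc, rsum_shift, Nat.add_0_r. f_equal.
  apply rsum_ext. intros j _. f_equal. lia.
Qed.

Lemma rsum_zero (g : nat -> R) a c : (forall j, (a <= j < a + c)%nat -> g j = 0) -> rsum g a c = 0.
Proof.
  intros H. rewrite (rsum_ext g (fun _ => 0)) by auto. clear H.
  revert a; induction c; simpl; auto. intros; rewrite IHc; ring.
Qed.

Lemma weight_not_W x : isW x = false -> weight x = 0.
Proof. destruct x; simpl; auto; discriminate. Qed.

Lemma existsb_seq_false (p : nat -> bool) a c :
  existsb p (seq a c) = false -> forall j, (a <= j < a + c)%nat -> p j = false.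
Proof.
  intros H j Hj. destruct (p j) eqn:E; auto. rewrite <- H. symmetry. apply existsb_exists.
  exists j. split; auto. apply in_seq. lia.
Qed.

Lemma existsb_seq_S (p : nat -> bool) a c :
  existsb p (seq (S a) c) = existsb (fun j => p (S j)) (seq a c).
Proof. revert a; induction c; intros a; simpl; auto. rewrite IHc. auto. Qed.

Lemma rsum_weight_no_W (h : nat -> Tt nat) K :
  existsb (fun j => isW (h j)) (seq 0 K) = false -> isW (h K) = false ->
  rsum (fun j => weight (h j)) 0 (S K) = 0.
Proof.
  intros H HK. apply rsum_zero. intros j Hj. apply weight_not_W.
  destruct (Nat.eq_dec j K) as [->|]; auto. apply (existsb_seq_false _ _ _ H). lia.
Qed.

(* The value that [tr] assigns to an input whose run stops at its [S K]-th entry. *)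
Definition exit_value l f x K : Tt nat :=
  let w := rsum (fun j => weight (run l f x j)) 0 (S K) in
  match run l f x K with
  | Pt k => if existsb (fun j => isW (run l f x j)) (seq 0 K) then Wt w (k - l)%nat else Pt (k - l)%nat
  | Wt _ k => Wt w (k - l)%nat
  | y => y
  end.

Lemma exit_value_S l f x K : cont l x = true ->
  exit_value l f x (S K) = carry x (exit_value l f (f (label x)) K).
Proof.
  intros Cx. set (x' := f (label x)).
  assert (Hs : forall j, run l f x (S j) = run l f x' j) by (intros; rewrite run_S, step_cont; auto).
  assert (Eb : existsb (fun j => isW (run l f x j)) (seq 0 (S K)) =
               (isW x || existsb (fun j => isW (run l f x' j)) (seq 0 K))%bool).
  { simpl. f_equal. rewrite existsb_seq_S. f_equal.
    apply functional_extensionality; intros; rewrite Hs; auto. }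
  assert (Es : rsum (fun j => weight (run l f x j)) 0 (S (S K)) =
               weight x + rsum (fun j => weight (run l f x' j)) 0 (S K)).
  { change (rsum (fun j => weight (run l f x j)) 0 (S (S K)))
      with (weight x + rsum (fun j => weight (run l f x j)) 1 (S K)).
    rewrite rsum_shift. f_equal. apply rsum_ext. intros; rewrite Hs; auto. }
  unfold exit_value. rewrite Hs, Eb, Es.
  destruct x as [z|s z| |]; simpl in Cx; try discriminate; cbn -[rsum].
  - destruct (run l f x' K); auto; rewrite Rplus_0_l; auto.
  - destruct (run l f x' K) eqn:EK; cbn -[rsum]; auto.
    destruct (existsb (fun j => isW (run l f x' j)) (seq 0 K)) eqn:EB; cbn -[rsum]; auto.
    rewrite rsum_weight_no_W by (rewrite ?EK; auto). f_equal; ring.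
Qed.

Lemma exits_exit_value l f K : forall x, (forall j, (j < K)%nat -> cont l (run l f x j) = true) ->
  cont l (run l f x K) = false -> exits l f x (exit_value l f x K).
Proof.
  induction K; intros x H1 H2.
  - replace (exit_value l f x 0) with (unshiftT l x); [apply exits_now; auto|].
    unfold exit_value; destruct x; simpl; auto. rewrite Rplus_0_r; auto.
  - assert (Cx : cont l x = true) by (apply (H1 O); lia).
    rewrite exit_value_S by auto. apply exits_later; auto. apply IHK.
    + intros j Hj. rewrite <- (step_cont l f x Cx), <- run_S. apply H1; lia.
    + rewrite <- (step_cont l f x Cx), <- run_S. auto.
Qed.

Lemma stopK_eq l f i K : (1 <= K)%nat -> cont l (vseq l f i K) = false ->
  (forall j, (1 <= j)%nat -> (j < K)%nat -> cont l (vseq l f i j) = true) -> stopK l f i = K.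
Proof.
  intros A B C. unfold stopK.
  set (P := fun K => (1 <= K)%nat /\ cont l (vseq l f i K) = false /\
     forall j, (1 <= j)%nat -> (j < K)%nat -> cont l (vseq l f i j) = true).
  destruct (epsilon_spec (inhabits O) P (ex_intro _ K (conj A (conj B C)))) as [A' [B' C']].
  set (K1 := epsilon (inhabits O) P) in *.
  destruct (lt_eq_lt_dec K1 K) as [[H|H]|H]; auto.
  - rewrite C in B' by lia. discriminate.
  - rewrite C' in B by lia. discriminate.
Qed.

Lemma tr_exits l f i y : exits l f (f (l + i)%nat) y -> tr l f i = y.
Proof.
  intros Hy. set (x := f (l + i)%nat) in *.
  destruct (exits_stops _ _ _ _ Hy) as [K' HK'].
  destruct (first_stop _ _ _ _ HK') as [K [Hc HK]].
  assert (Hst : stopK l f i = S K).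
  { apply stopK_eq; [lia|rewrite vseq_run; auto|].
    intros [|j] A B; [lia|]. rewrite vseq_run. apply Hc. lia. }
  assert (Hfin : finite_seq l f i) by (apply finite_seq_exits; eauto).
  unfold tr. destruct (excluded_middle_informative (finite_seq l f i)) as [_|]; [|contradiction].
  cbv zeta. rewrite Hst. replace (S K - 1)%nat with K by lia. rewrite vseq_run.
  assert (E1 : rsum (fun j => weight (vseq l f i j)) 1 (S K) =
               rsum (fun j => weight (run l f x j)) 0 (S K)).
  { rewrite rsum_shift. apply rsum_ext. intros; rewrite vseq_run; auto. }
  assert (E2 : existsb (fun j => isW (vseq l f i j)) (seq 1 K) =
               existsb (fun j => isW (run l f x j)) (seq 0 K)).
  { rewrite existsb_seq_S. f_equal. apply functional_extensionality; intros; rewrite vseq_run; auto. }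
  rewrite E1, E2. fold x. eapply exits_functional; [|exact Hy]. apply (exits_exit_value l f K x Hc HK).
Qed.

Lemma tr_diverges_liminf l f i : diverges l f (f (l + i)%nat) ->
  tr l f i = if Rbar_le_dec (Finite 0) (LimInf_seq (avgW l f i)) then Ex else Fa.
Proof.
  intros D. unfold tr. destruct (excluded_middle_informative (finite_seq l f i)) as [F|]; auto.
  apply finite_seq_exits in F as [y Hy]. exfalso. eapply exits_not_diverges; eauto.
Qed.

(** * Linear drift *)

Definition bounded_below (P : nat -> R) : Prop := exists B, forall N, B <= P N.

Definition linear_drift (P : nat -> R) (p0 q : nat) s : Prop :=
  (1 <= q)%nat /\ forall p, (p0 <= p)%nat -> P (p + q)%nat = P p + s.

Lemma Rabs_bounded_prefix (D : nat -> R) N : exists M, forall p, (p < N)%nat -> Rabs (D p) <= M.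
Proof.
  induction N as [|N [M HM]]; [exists 0; intros; lia|].
  exists (Rmax M (Rabs (D N))). intros p Hp.
  destruct (Nat.eq_dec p N) as [->|]; [apply Rmax_r|].
  eapply Rle_trans; [apply HM; lia|apply Rmax_l].
Qed.

Lemma linear_drift_error P p0 q s : linear_drift P p0 q s ->
  exists M, forall p, Rabs (P p - s / INR q * INR p) <= M.
Proof.
  intros [Hq HP]. set (D := fun p => P p - s / INR q * INR p).
  assert (Hqr : 0 < INR q) by (apply lt_0_INR; lia).
  assert (HD : forall p, (p0 <= p)%nat -> D (p + q)%nat = D p).
  { intros p Hp. unfold D. rewrite HP, plus_INR by auto. field. lra. }
  destruct (Rabs_bounded_prefix D (p0 + q)) as [M HM]. exists M.
  intros p. induction p as [p IH] using (well_founded_induction lt_wf).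
  destruct (lt_dec p (p0 + q)); [apply HM; auto|].
  replace p with ((p - q) + q)%nat by lia. fold (D ((p - q) + q)%nat). rewrite HD by lia. apply IH. lia.
Qed.

Lemma linear_drift_neg P p0 q s : linear_drift P p0 q s -> s < 0 ->
  forall B, exists N, forall p, (N <= p)%nat -> P p < B.
Proof.
  intros H Hs B. pose proof H as [Hq _]. destruct (linear_drift_error _ _ _ _ H) as [M HM].
  assert (Hsig : s / INR q < 0).
  { apply Rdiv_neg_pos; auto. apply lt_0_INR; lia. }
  destruct (INR_archimed (- (s / INR q)) (M - B) ltac:(lra)) as [N HN].
  exists N. intros p Hp. specialize (HM p). apply Rabs_le_between in HM.
  apply le_INR in Hp. nra.
Qed.

Lemma bounded_below_drift P p0 q s : linear_drift P p0 q s -> (bounded_below P <-> 0 <= s).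
Proof.
  intros H. split.
  - intros [B HB]. destruct (Rle_lt_dec 0 s) as [|Hs]; auto.
    destruct (linear_drift_neg _ _ _ _ H Hs B) as [N HN].
    specialize (HN N (le_n N)). specialize (HB N). lra.
  - intros Hs. pose proof H as [Hq _]. destruct (linear_drift_error _ _ _ _ H) as [M HM].
    exists (- M). intros N. specialize (HM N). apply Rabs_le_between in HM.
    assert (0 <= s / INR q * INR N).
    { apply Rmult_le_pos; [apply Rdiv_le_0_compat; auto; apply lt_0_INR; lia|apply pos_INR]. }
    lra.
Qed.

Lemma bounded_below_cofinal P P' p0 q s : linear_drift P p0 q s ->
  (forall N, exists p, (N <= p)%nat /\ P' N = P p) -> (bounded_below P <-> bounded_below P').
Proof.
  intros H Hc. split.
  - intros [B HB]. exists B. intros N. destruct (Hc N) as [p [_ ->]]. auto.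
  - intros [B HB]. apply (bounded_below_drift _ _ _ _ H).
    destruct (Rle_lt_dec 0 s) as [|Hs]; auto.
    destruct (linear_drift_neg _ _ _ _ H Hs B) as [N HN]. destruct (Hc N) as [p [Hp E]].
    specialize (HB N). specialize (HN p Hp). lra.
Qed.

Lemma bounded_below_close P1 P2 C :
  (forall N, Rabs (P1 N - P2 N) <= C) -> (bounded_below P1 <-> bounded_below P2).
Proof.
  intros H. split; intros [B HB]; exists (B - C); intros N; specialize (H N); specialize (HB N);
    apply Rabs_le_between in H; lra.
Qed.

Lemma bounded_below_shift P p : bounded_below (fun N => P (p + N)%nat) <-> bounded_below P.
Proof.
  split; intros [B HB].
  - destruct (Rabs_bounded_prefix P p) as [M HM]. exists (Rmin B (- M)). intros N.
    destruct (lt_dec N p) as [Hp|Hp].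
    + specialize (HM N Hp). apply Rabs_le_between in HM. pose proof (Rmin_r B (- M)). lra.
    + replace N with (p + (N - p))%nat by lia. eapply Rle_trans; [apply Rmin_l|apply HB].
  - exists B. intros N. apply HB.
Qed.

Lemma is_lim_seq_inv_INR c : is_lim_seq (fun n => c * / INR n) 0.
Proof.
  replace (Finite 0) with (Rbar_mult c 0) by (simpl; f_equal; ring).
  apply is_lim_seq_scal_l. replace (Finite 0) with (Rbar_inv p_infty) by reflexivity.
  apply is_lim_seq_inv; [apply is_lim_seq_INR|discriminate].
Qed.

Lemma LimInf_inv_INR c d : LimInf_seq (fun n => c * / INR n + d) = Finite d.
Proof.
  apply is_LimInf_seq_unique, is_lim_LimInf_seq.
  replace (Finite d) with (Rbar_plus 0 d) by (simpl; f_equal; ring).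
  apply is_lim_seq_plus'; [apply is_lim_seq_inv_INR|apply is_lim_seq_const].
Qed.

Lemma LimInf_average_drift (A P : nat -> R) (pos : nat -> nat) p0 q s :
  linear_drift P p0 q s -> (forall t, (t < pos t)%nat /\ A (S t) = P (pos t) / INR (S t)) ->
  (Rbar_le 0 (LimInf_seq A) <-> 0 <= s).
Proof.
  intros HP HA. pose proof HP as [Hq _]. destruct (linear_drift_error _ _ _ _ HP) as [M HM].
  assert (Hqr : 0 < INR q) by (apply lt_0_INR; lia).
  set (sig := s / INR q) in *.
  assert (Hsig : 0 <= s <-> 0 <= sig) by (unfold sig; split; intros;
    [apply Rdiv_le_0_compat|apply Rmult_le_reg_r with (/ INR q); [apply Rinv_0_lt_compat|]]; lra).
  split.
  - intros C. apply Hsig. destruct (Rle_lt_dec 0 sig) as [|Hs]; auto. exfalso.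
    assert (C2 : Rbar_le (LimInf_seq A) (LimInf_seq (fun n => M * / INR n + sig))).
    { apply LimInf_le. exists 1%nat. intros [|t] Ht; [lia|].
      destruct (HA t) as [Hpos ->]. specialize (HM (pos t)). apply Rabs_le_between in HM.
      assert (0 < INR (S t)) by (apply lt_0_INR; lia).
      assert (INR (S t) <= INR (pos t)) by (apply le_INR; lia).
      assert (sig * INR (pos t) <= sig * INR (S t)) by (apply Rmult_le_compat_neg_l; lra).
      replace (M * / INR (S t) + sig) with ((M + sig * INR (S t)) / INR (S t)) by (field; lra).
      unfold Rdiv. apply Rmult_le_compat_r; [left; apply Rinv_0_lt_compat; auto|lra]. }
    rewrite LimInf_inv_INR in C2. pose proof (Rbar_le_trans _ _ _ C C2). simpl in *. lra.
  - intros Hs. apply Hsig in Hs. rewrite <- (LimInf_inv_INR (- M) 0).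
    apply LimInf_le. exists 1%nat. intros [|t] Ht; [lia|].
    destruct (HA t) as [_ ->]. specialize (HM (pos t)). apply Rabs_le_between in HM.
    assert (0 < INR (S t)) by (apply lt_0_INR; lia).
    assert (0 <= sig * INR (pos t)) by (apply Rmult_le_pos; auto; apply pos_INR).
    rewrite Rplus_0_r. unfold Rdiv. apply Rmult_le_compat_r; [left; apply Rinv_0_lt_compat; auto|lra].
Qed.

(** * Diverging runs *)

Definition psum l f x (N : nat) : R := rsum (fun j => weight (run l f x j)) 0 N.

Lemma psum_S l f x N : psum l f x (S N) = psum l f x N + weight (run l f x N).
Proof. apply rsum_snoc. Qed.

Lemma psum_add l f x p c : psum l f x (p + c) = psum l f x p + psum l f (run l f x p) c.
Proof.
  unfold psum. rewrite rsum_add, (rsum_offset _ (0 + p)). f_equal.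
  apply rsum_ext. intros j _. rewrite run_add. auto.
Qed.

Lemma pigeonhole_nat l (x : nat -> nat) :
  (forall j, (j <= l)%nat -> (x j < l)%nat) -> exists a b, (a < b <= l)%nat /\ x a = x b.
Proof.
  intros Hx. apply NNPP. intros Hno.
  assert (ND : NoDup (map x (seq 0 (S l)))).
  { apply (NoDup_nth _ (x O)). rewrite length_map, length_seq. intros a b Ha Hb E.
    rewrite !map_nth, !seq_nth in E by auto. simpl in E.
    destruct (lt_eq_lt_dec a b) as [[H|H]|H]; auto; exfalso; apply Hno.
    - exists a, b. split; auto; lia.
    - exists b, a. split; auto; lia. }
  assert (Inc : incl (map x (seq 0 (S l))) (seq 0 l)).
  { intros y Hy. apply in_map_iff in Hy as [j [<- Hj]].
    apply in_seq in Hj. apply in_seq. specialize (Hx j). lia. }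
  pose proof (NoDup_incl_length ND Inc) as H. rewrite length_map, !length_seq in H. lia.
Qed.

Lemma diverges_periodic l m n f i : Arr (l + m) (l + n) f -> (i < m)%nat ->
  diverges l f (f (l + i)%nat) -> exists a q, (1 <= q)%nat /\
    (forall j, (a <= j)%nat -> run l f (f (l + i)%nat) (j + q) = run l f (f (l + i)%nat) j) /\
    exists jw, (a <= jw < a + q)%nat /\ isW (run l f (f (l + i)%nat) jw) = true.
Proof.
  intros [_ Rf] Hi D. rewrite realizableP in Rf. set (x0 := f (l + i)%nat) in *.
  set (node := fun j => label (run l f x0 j)).
  assert (Hnode : forall j, (node j < l)%nat) by (intros; apply (cont_label_lt l), D).
  assert (Hrun : forall j, run l f x0 (S j) = f (node j)) by (intros; apply run_S_cont, D).
  assert (Htg : forall j, targets (node j) (run l f x0 j)) by (intros; apply (cont_targets l), D).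
  destruct (pigeonhole_nat l node) as [a [b [Hab Hxab]]]; [intros; auto|].
  destruct (least_witness (fun a => exists b, (a < b)%nat /\ node a = node b) a)
    as [a0 [[b0 [Hab0 Hx0]] Hmin]]; [exists b; split; [lia|auto]|].
  assert (Hper : forall t, node (a0 + t)%nat = node (b0 + t)%nat).
  { induction t; [rewrite !Nat.add_0_r; auto|].
    rewrite !Nat.add_succ_r. unfold node at 1 2. rewrite !Hrun, IHt. auto. }
  exists (S a0), (b0 - a0)%nat. split; [lia|split].
  - intros [|j] Hj; [lia|]. simpl (S j + (b0 - a0))%nat. rewrite !Hrun.
    replace (j + (b0 - a0))%nat with (b0 + (j - a0))%nat by lia. rewrite <- Hper. do 2 f_equal. lia.
  (* Otherwise [node a0] would be the [Pt]-target of [node (b0 - 1)] and also targeted by the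
     input [l + i] or by [node (a0 - 1)], contradicting realizability or the minimality of [a0]. *)
  - apply NNPP. intros NW. destruct b0 as [|b']; [lia|].
    assert (Pb : f (node b') = Pt (node a0)).
    { assert (Wb : isW (run l f x0 (S b')) = false).
      { destruct (isW _) eqn:E; auto. exfalso. apply NW. exists (S b'). split; [lia|auto]. }
      rewrite Hx0. specialize (Htg (S b')). rewrite Hrun in Htg, Wb.
      destruct Htg as [E|[r E]]; rewrite E in Wb |- *; [auto|discriminate]. }
    destruct a0 as [|a'].
    + specialize (Rf (node b') (l + i)%nat (node O)). specialize (Hnode b').
      assert (l + i = node b')%nat by (apply Rf; auto; lia). lia.
    + assert (Ta : targets (node (S a')) (f (node a'))) by (rewrite <- Hrun; auto).
      apply (Hmin a'); [lia|]. exists b'. split; [lia|].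
      pose proof (Hnode a'). pose proof (Hnode b').
      apply (Rf (node b') (node a') (node (S a'))); auto; lia.
Qed.

Definition verdict (P : Prop) : Tt nat := if excluded_middle_informative P then Ex else Fa.

Lemma verdict_iff (P Q : Prop) : (P <-> Q) -> verdict P = verdict Q.
Proof.
  intros H. unfold verdict.
  destruct (excluded_middle_informative P), (excluded_middle_informative Q); auto; exfalso; tauto.
Qed.

Lemma psum_periodic_drift l f x a q : (1 <= q)%nat ->
  (forall j, (a <= j)%nat -> run l f x (j + q) = run l f x j) ->
  linear_drift (psum l f x) a q (psum l f x (a + q) - psum l f x a).
Proof.
  intros Hq Hper. split; auto. intros p Hp. replace p with (a + (p - a))%nat by lia.
  generalize (p - a)%nat as d. induction d; [rewrite Nat.add_0_r; ring|].
  replace (a + S d + q)%nat with (S (a + d + q)) by lia.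
  rewrite Nat.add_succ_r, !psum_S, IHd, Hper by lia. ring.
Qed.

Lemma psum_diverges_drift l m n f i : Arr (l + m) (l + n) f -> (i < m)%nat ->
  diverges l f (f (l + i)%nat) -> exists p0 q s, linear_drift (psum l f (f (l + i)%nat)) p0 q s.
Proof.
  intros Hf Hi D. destruct (diverges_periodic _ _ _ _ _ Hf Hi D) as [a [q [Hq [Hper _]]]].
  eexists _, _, _. apply psum_periodic_drift; eauto.
Qed.

Lemma nextW_spec l f i p : (exists j, (p < j)%nat /\ isW (vseq l f i j) = true) ->
  (p < nextW l f i p)%nat /\ isW (vseq l f i (nextW l f i p)) = true /\
  forall k, (p < k < nextW l f i p)%nat -> isW (vseq l f i k) = false.
Proof.
  intros [j Hj].
  destruct (least_witness (fun j => (p < j)%nat /\ isW (vseq l f i j) = true) j Hj) as [j0 [[A B] C]].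
  unfold nextW. destruct (epsilon_spec (inhabits O) (fun j => (p < j)%nat /\ isW (vseq l f i j) = true /\
     forall k, (p < k)%nat -> (k < j)%nat -> isW (vseq l f i k) = false)) as [A' [B' C']].
  - exists j0. repeat split; auto. intros k H1 H2. destruct (isW (vseq l f i k)) eqn:E; auto.
    exfalso. apply (C k); auto.
  - repeat split; auto. intros k Hk. apply C'; lia.
Qed.

Lemma avgW_psum l f i : (forall p, exists j, (p < j)%nat /\ isW (vseq l f i j) = true) ->
  forall t, (t < posW l f i t)%nat /\
    avgW l f i (S t) = psum l f (f (l + i)%nat) (posW l f i t) / INR (S t).
Proof.
  intros ExW. set (P := psum l f (f (l + i)%nat)).
  assert (Gap : forall p1 p2, (p1 < p2)%nat ->
    (forall k, (p1 < k < p2)%nat -> isW (vseq l f i k) = false) ->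
     P p2 = P p1 + weight (vseq l f i p2)).
  { intros p1 p2 H12 Hk. replace p2 with (S (p1 + (p2 - p1 - 1)))%nat by lia.
    unfold P, psum. rewrite rsum_snoc, rsum_add, (rsum_zero _ (0 + p1)), vseq_run; [simpl; ring|].
    intros j Hj. apply weight_not_W. rewrite <- vseq_run. apply Hk; lia. }
  assert (Hpos : forall t, (t < posW l f i t)%nat /\ rsum (wprime l f i) 0 (S t) = P (posW l f i t)).
  { induction t as [|t [IH1 IH2]].
    - simpl. destruct (nextW_spec l f i O (ExW O)) as [A [B C]]. split; auto.
      rewrite (Gap O (nextW l f i 0)); auto. unfold wprime, P, psum. simpl. ring.
    - simpl (posW l f i (S t)).
      destruct (nextW_spec l f i _ (ExW (posW l f i t))) as [A [B C]]. split; [lia|].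
      rewrite rsum_snoc, IH2. rewrite (Gap (posW l f i t) (nextW l f i (posW l f i t))); auto. }
  intros t. split; [apply Hpos|]. unfold avgW. rewrite (proj2 (Hpos t)). auto.
Qed.

Lemma tr_diverges l m n f i : Arr (l + m) (l + n) f -> (i < m)%nat ->
  diverges l f (f (l + i)%nat) -> tr l f i = verdict (bounded_below (psum l f (f (l + i)%nat))).
Proof.
  intros Hf Hi D. destruct (diverges_periodic _ _ _ _ _ Hf Hi D) as [a [q [Hq [Hper [jw [Hjw Wjw]]]]]].
  set (x0 := f (l + i)%nat) in *.
  pose proof (psum_periodic_drift l f x0 a q Hq Hper) as Hdrift.
  assert (Hrep : forall k, run l f x0 (jw + k * q)%nat = run l f x0 jw).
  { induction k; [rewrite Nat.add_0_r; auto|].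
    replace (jw + S k * q)%nat with ((jw + k * q) + q)%nat by lia. rewrite Hper by lia. auto. }
  assert (ExW : forall p, exists j, (p < j)%nat /\ isW (vseq l f i j) = true).
  { intros p. exists (S (jw + p * q)). split; [nia|]. rewrite vseq_run. fold x0. rewrite Hrep. auto. }
  rewrite tr_diverges_liminf by auto. unfold verdict.
  pose proof (LimInf_average_drift _ _ _ _ _ _ Hdrift (avgW_psum l f i ExW)) as Hlim.
  pose proof (bounded_below_drift _ _ _ _ Hdrift) as Hbb.
  destruct (Rbar_le_dec _ _), (excluded_middle_informative _); auto; exfalso; tauto.
Qed.

(** * The trace is an arrow *)

Lemma exits_labels l n f x y : exits l f x y -> labels_lt (l + n) x ->
  (forall z, (z < l)%nat -> labels_lt (l + n) (f z)) -> labels_lt n y.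
Proof.
  intros H; induction H as [z C|z w C _ IH]; intros Lz Lf.
  - destruct z; simpl in *; auto; apply Nat.ltb_ge in C; lia.
  - assert (labels_lt n w) by (apply IH; auto; apply Lf, (cont_label_lt l), C).
    destruct z; simpl; auto. apply labels_lt_add_weight; auto.
Qed.

Lemma tr_labels l m n f i : Arr (l + m) (l + n) f -> (i < m)%nat -> labels_lt n (tr l f i).
Proof.
  intros Hf Hi. destruct (exits_or_diverges l f (f (l + i)%nat)) as [[y Hy]|D].
  - rewrite (tr_exits _ _ _ _ Hy). destruct Hf as [Lf _].
    eapply exits_labels; eauto; [apply Lf|intros; apply Lf]; lia.
  - rewrite (tr_diverges _ _ _ _ _ Hf Hi D). unfold verdict.
    destruct (excluded_middle_informative _); exact I.
Qed.

Lemma tr_labelled_exits l f i : labelled (tr l f i) -> exits l f (f (l + i)%nat) (tr l f i).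
Proof.
  intros H. destruct (exits_or_diverges l f (f (l + i)%nat)) as [[y Hy]|D].
  - rewrite (tr_exits _ _ _ _ Hy). auto.
  - rewrite (tr_diverges_liminf _ _ _ D) in H. destruct (Rbar_le_dec _ _); destruct H.
Qed.

Lemma exits_Pt l f x k : exits l f x (Pt k) -> exists K,
  (forall j, (j < K)%nat -> cont l (run l f x j) = true /\ run l f x j = Pt (label (run l f x j))) /\
  run l f x K = Pt (l + k)%nat.
Proof.
  remember (Pt k) as y eqn:Ey. intros H. revert Ey. induction H as [w C|w y C _ IH]; intros Ey.
  - exists O. split; [intros; lia|]. destruct w; simpl in *; inversion Ey; subst.
    apply Nat.ltb_ge in C. f_equal. lia.
  - destruct w as [z|s z| |]; simpl in C, Ey; try discriminate.
    + destruct (IH Ey) as [K [H1 H2]]. exists (S K).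
      assert (Hs : forall j, run l f (Pt z) (S j) = run l f (f z) j)
        by (intros; rewrite run_S, step_cont; auto).
      split; [|rewrite Hs; auto]. intros [|j] Hj; [simpl; auto|]. rewrite Hs. apply H1. lia.
    + destruct y; discriminate.
Qed.

Lemma exits_targets l f x y k : exits l f x y -> targets k y -> exists K,
  (forall j, (j < K)%nat -> cont l (run l f x j) = true) /\ targets (l + k)%nat (run l f x K).
Proof.
  intros H; induction H as [w C|w z C _ IH]; intros Hy.
  - exists O. split; [intros; lia|]. simpl.
    destruct w as [z|s z| |]; simpl in C, Hy; destruct Hy as [E|[s' E]]; inversion E; subst;
      apply Nat.ltb_ge in C.
    + left. f_equal. lia.
    + right. exists s'. f_equal. lia.
  - assert (Hz : targets k z) by (destruct w; simpl in Hy; auto; eapply targets_add_weight; eauto).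
    destruct (IH Hz) as [K [H1 H2]]. exists (S K).
    assert (Hs : forall j, run l f w (S j) = run l f (f (label w)) j)
      by (intros; rewrite run_S, step_cont; auto).
    split; [|rewrite Hs; auto]. intros [|j] Hj; [simpl; auto|]. rewrite Hs. apply H1. lia.
Qed.

(* Realizability makes a [Pt]-edge the only edge into its target, so chains ending in the same
   node can be followed backwards in lockstep. *)
Lemma realizable_chains_merge M f (X Y : nat -> nat) K K' c : realizable M f ->
  (forall t, (t <= K)%nat -> (X t < M)%nat) -> (forall t, (t <= K')%nat -> (Y t < M)%nat) ->
  (forall t, (t < K)%nat -> f (X t) = Pt (X (S t))) -> f (X K) = Pt c ->
  (forall t, (t < K')%nat -> targets (Y (S t)) (f (Y t))) -> targets c (f (Y K')) ->
  forall d, (d <= K)%nat -> (d <= K')%nat -> X (K - d)%nat = Y (K' - d)%nat.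
Proof.
  intros Rf HX HY FX FXK FY FYK. rewrite realizableP in Rf.
  induction d as [|d IH]; intros H1 H2.
  - rewrite !Nat.sub_0_r. symmetry. apply (Rf (X K) (Y K') c); auto.
  - symmetry.
    apply (Rf (X (K - S d)%nat) (Y (K' - S d)%nat) (X (K - d)%nat)); try (apply HX || apply HY; lia).
    + replace (K - d)%nat with (S (K - S d)) by lia. apply FX. lia.
    + rewrite IH by lia. replace (K' - d)%nat with (S (K' - S d)) by lia. apply FY. lia.
Qed.

Definition node l f a t : nat := match t with O => a | S t' => label (run l f (f a) t') end.

Lemma run_node l f a t : (forall t', (t' < t)%nat -> cont l (run l f (f a) t') = true) ->
  run l f (f a) t = f (node l f a t).
Proof. destruct t; intros H; simpl; auto. apply step_cont. apply H; lia. Qed.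

Lemma node_lt l f a t : (forall t', (t' < S t)%nat -> cont l (run l f (f a) t') = true) ->
  (node l f a (S t) < l)%nat.
Proof. intros H. apply cont_label_lt, H. lia. Qed.

Lemma tr_realizable l m n f : Arr (l + m) (l + n) f -> realizable m (tr l f).
Proof.
  intros [Lf Rf]. apply realizableP. intros i j k Hi Hj Hti Htj.
  assert (Ei : exits l f (f (l + i)%nat) (Pt k))
    by (rewrite <- Hti; apply tr_labelled_exits; rewrite Hti; exact I).
  assert (Ej : exits l f (f (l + j)%nat) (tr l f j))
    by (apply tr_labelled_exits; destruct Htj as [->|[r ->]]; exact I).
  destruct (exits_Pt _ _ _ _ Ei) as [K [Hc HK]].
  destruct (exits_targets _ _ _ _ _ Ej Htj) as [K' [Hc' HK']].
  set (X := node l f (l + i)%nat). set (Y := node l f (l + j)%nat).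
  assert (RX : forall t, (t <= K)%nat -> run l f (f (l + i)%nat) t = f (X t))
    by (intros t Ht; apply run_node; intros; apply Hc; lia).
  assert (RY : forall t, (t <= K')%nat -> run l f (f (l + j)%nat) t = f (Y t))
    by (intros t Ht; apply run_node; intros; apply Hc'; lia).
  assert (BX : forall t, (1 <= t <= K)%nat -> (X t < l)%nat).
  { intros [|t] Ht; [lia|]. apply node_lt. intros; apply Hc; lia. }
  assert (BY : forall t, (1 <= t <= K')%nat -> (Y t < l)%nat).
  { intros [|t] Ht; [lia|]. apply node_lt. intros; apply Hc'; lia. }
  assert (XY : forall d, (d <= K)%nat -> (d <= K')%nat -> X (K - d)%nat = Y (K' - d)%nat).
  { apply (realizable_chains_merge (l + m) f X Y K K' (l + k) Rf).
    - intros [|t] Ht; [simpl; lia|]. pose proof (BX (S t)). lia.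
    - intros [|t] Ht; [simpl; lia|]. pose proof (BY (S t)). lia.
    - intros t Ht. rewrite <- RX by lia. apply Hc. auto.
    - rewrite <- RX; auto.
    - intros t Ht. rewrite <- RY by lia. apply (cont_targets l), Hc'. auto.
    - rewrite <- RY; auto. }
  destruct (le_lt_dec K K') as [LK|LK].
  - specialize (XY K (le_n K) LK). rewrite Nat.sub_diag in XY. unfold X in XY. simpl in XY.
    destruct (Nat.eq_dec K' K) as [->|NE].
    + rewrite Nat.sub_diag in XY. unfold Y in XY. simpl in XY. lia.
    + pose proof (BY (K' - K)%nat ltac:(lia)). lia.
  - specialize (XY K' (Nat.lt_le_incl _ _ LK) (le_n K')). rewrite Nat.sub_diag in XY.
    unfold Y in XY. simpl in XY. pose proof (BX (K - K')%nat ltac:(lia)). lia.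
Qed.

Lemma tr_Arr l m n f : Arr (l + m) (l + n) f -> Arr m n (tr l f).
Proof. intros Hf. split; [intros; eapply tr_labels; eauto|apply (tr_realizable l m n f Hf)]. Qed.

Lemma well_defined_ops_hold : well_defined_ops.
Proof.
  split; [apply id_Arr|split; [intros; eapply comp_Arr; eauto|split; [intros; apply sum_Arr; auto|]]].
  split; [apply sym_Arr|intros; eapply tr_Arr; eauto].
Qed.

(** * The trace axioms *)

Lemma tr_vanishing0 m n f : Arr m n f -> eqA m (tr 0 f) f.
Proof.
  intros _ i _. apply tr_exits. simpl. replace (f i) with (unshiftT 0 (f i)) at 2.
  - apply exits_now. destruct (f i); reflexivity.
  - destruct (f i); simpl; auto; rewrite Nat.sub_0_r; auto.
Qed.

Lemma tr_yanking m : eqA m (tr m (sym m m)) idA.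
Proof.
  intros i Hi. apply tr_exits. unfold idA.
  assert (E1 : sym m m (m + i)%nat = Pt i).
  { unfold sym. destruct (Nat.ltb_spec (m + i) m); [lia|]. f_equal; lia. }
  assert (E2 : sym m m i = Pt (m + i)%nat).
  { unfold sym. destruct (Nat.ltb_spec i m); [auto|lia]. }
  rewrite E1. change (Pt i) with (carry (Pt i) (Pt i)) at 2. apply exits_later.
  - simpl. apply Nat.ltb_lt; auto.
  - simpl. rewrite E2. replace (Pt i) with (unshiftT m (Pt (m + i)%nat)) by (simpl; f_equal; lia).
    apply exits_now. simpl. apply Nat.ltb_ge; lia.
Qed.

Lemma exits_ext l f f' x y : (forall z, (z < l)%nat -> f z = f' z) -> exits l f x y -> exits l f' x y.
Proof.
  intros H W; induction W as [x C|x y C W IH]; [apply exits_now; auto|].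
  apply exits_later; auto. rewrite <- H; auto. apply (cont_label_lt l); auto.
Qed.

Lemma tr_ext l m n m' n' f f' i i' : Arr (l + m) (l + n) f -> Arr (l + m') (l + n') f' ->
  (i < m)%nat -> (i' < m')%nat -> (forall z, (z < l)%nat -> f z = f' z) ->
  f (l + i)%nat = f' (l + i')%nat -> tr l f i = tr l f' i'.
Proof.
  intros Hf Hf' Hi Hi' Ext E. set (x := f (l + i)%nat) in *.
  assert (Hrun : forall t, run l f x t = run l f' x t) by (intros; apply run_ext; auto).
  destruct (exits_or_diverges l f x) as [[y Hy]|D].
  - rewrite (tr_exits _ _ _ _ Hy). symmetry. apply tr_exits. rewrite <- E. eapply exits_ext; eauto.
  - assert (D' : diverges l f' (f' (l + i')%nat)) by (rewrite <- E; intros t; rewrite <- Hrun; auto).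
    rewrite (tr_diverges _ _ _ _ _ Hf Hi D), (tr_diverges _ _ _ _ _ Hf' Hi' D'), <- E.
    apply verdict_iff. replace (psum l f' x) with (psum l f x); [tauto|].
    apply functional_extensionality. intros N. apply rsum_ext. intros; rewrite Hrun; auto.
Qed.

Lemma unshiftT_shiftT l x : unshiftT l (shiftT l x) = x.
Proof. destruct x; simpl; auto; f_equal; lia. Qed.

Lemma cont_shiftT l x : cont l (shiftT l x) = false.
Proof. destruct x; simpl; auto; apply Nat.ltb_ge; lia. Qed.

Lemma tr_superposing l m n m' n' f g : Arr (l + m) (l + n) f -> Arr m' n' g ->
  eqA (m + m') (sum m n (tr l f) g) (tr l (sum (l + m) (l + n) f g)).
Proof.
  intros Hf Hg i Hi. set (F := sum (l + m) (l + n) f g).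
  assert (HF : Arr (l + (m + m')) (l + (n + n')) F) by (rewrite !Nat.add_assoc; apply sum_Arr; auto).
  assert (Ff : forall z, (z < l + m)%nat -> F z = f z).
  { intros z Hz. unfold F, sum. destruct (Nat.ltb_spec z (l + m)); auto; lia. }
  unfold sum at 1. destruct (Nat.ltb_spec i m) as [Q|Q].
  - apply (tr_ext l m n (m + m') (n + n')); auto; [intros z Hz|]; rewrite Ff; auto; lia.
  - symmetry. apply tr_exits. unfold F, sum.
    destruct (Nat.ltb_spec (l + i) (l + m)); [lia|].
    replace (l + i - (l + m))%nat with (i - m)%nat by lia.
    rewrite <- (unshiftT_shiftT l (shiftT n (g (i - m)%nat))), shiftT_shiftT.
    apply exits_now. rewrite <- shiftT_shiftT. apply cont_shiftT.
Qed.

Lemma cont_add_weight l r x : cont l (add_weight r x) = cont l x.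
Proof. destruct x; reflexivity. Qed.

Lemma cont_carry l c x : cont l (carry c x) = cont l x.
Proof. destruct c; simpl; auto. apply cont_add_weight. Qed.

Lemma label_carry c x : label (carry c x) = label x.
Proof. destruct c, x; reflexivity. Qed.

Lemma weight_carry c x : labelled x -> weight (carry c x) = weight c + weight x.
Proof. destruct c, x; simpl; try tauto; intros; ring. Qed.

Lemma unshiftT_carry l c x : unshiftT l (carry c x) = carry c (unshiftT l x).
Proof. destruct c, x; reflexivity. Qed.

Lemma carry_carry c x y : labelled x -> carry (carry c x) y = carry c (carry x y).
Proof. destruct c, x, y; simpl; try tauto; intros; f_equal; ring. Qed.

Lemma bindT_carry c x g : bindT (carry c x) g = carry c (bindT x g).
Proof. destruct c; simpl; auto. apply bindT_add_weight. Qed.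

Lemma carry_verdict c P : carry c (verdict P) = verdict P.
Proof. unfold verdict. destruct c, (excluded_middle_informative P); reflexivity. Qed.

Lemma bindT_verdict P g : bindT (verdict P) g = verdict P.
Proof. unfold verdict. destruct (excluded_middle_informative P); reflexivity. Qed.

Lemma exits_carry l f c x y : exits l f x y -> exits l f (carry c x) (carry c y).
Proof.
  intros [x' C|x' y' C W].
  - rewrite <- unshiftT_carry. apply exits_now. rewrite cont_carry; auto.
  - rewrite <- carry_carry by (apply (cont_labelled l); auto).
    apply exits_later; [rewrite cont_carry; auto|rewrite label_carry; auto].
Qed.

Lemma psum_cons l f x N : psum l f x (S N) = weight x + psum l f (step l f x) N.
Proof. rewrite <- Nat.add_1_l, psum_add. unfold psum at 1. simpl. ring. Qed.

Lemma psum_close l f F x y : (forall t, run l F y (S t) = run l f x (S t)) ->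
  forall N, Rabs (psum l F y N - psum l f x N) <= Rabs (weight y - weight x).
Proof.
  intros H [|N]; [unfold psum; simpl; rewrite Rminus_diag, Rabs_R0; apply Rabs_pos|].
  rewrite !psum_cons.
  replace (psum l F (step l F y) N) with (psum l f (step l f x) N); [right; f_equal; ring|].
  apply rsum_ext. intros t _. rewrite <- !run_S, H. auto.
Qed.

Lemma bindT_sum_id_cont l h x : cont l x = true -> bindT x (sum l l idA h) = x.
Proof.
  intros C. pose proof (cont_label_lt _ _ C).
  destruct x; simpl in *; try discriminate; rewrite sum_lt; auto.
Qed.

Lemma exits_bindT l n f h x y : exits l f x y -> labels_lt (l + n) x ->
  (forall z, (z < l)%nat -> labels_lt (l + n) (f z)) ->
  exits l (fun z => bindT (f z) (sum l l idA h)) (bindT x (sum l l idA h)) (bindT y h).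
Proof.
  intros W; induction W as [x C|x y C W IH]; intros Lx Lf.
  - destruct x as [k|s k| |]; simpl in *; try (apply (exits_now l _ Ex); reflexivity);
      try (apply (exits_now l _ Fa); reflexivity);
      apply Nat.ltb_ge in C; rewrite sum_ge by auto;
      rewrite <- (unshiftT_shiftT l (h (k - l)%nat)) at 2.
    + apply exits_now. apply cont_shiftT.
    + change (add_weight s (unshiftT l (shiftT l (h (k - l)%nat))))
        with (carry (Wt s k) (unshiftT l (shiftT l (h (k - l)%nat)))).
      rewrite <- unshiftT_carry. apply exits_now. rewrite cont_carry. apply cont_shiftT.
  - rewrite bindT_sum_id_cont, bindT_carry by auto. apply exits_later; auto.
    apply IH; [apply Lf, (cont_label_lt l)|]; auto.
Qed.

Lemma run_diverges_ext l f F x : diverges l f x ->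
  (forall z, (z < l)%nat -> cont l (f z) = true -> F z = f z) -> forall t, run l F x t = run l f x t.
Proof.
  intros D H. induction t; simpl; auto. rewrite IHt, !step_cont by auto.
  apply H; [apply (cont_label_lt l), D|]. rewrite <- run_S_cont by apply D. apply D.
Qed.

Lemma tr_postcompose l m n m' n' f h F i j c :
  Arr (l + m) (l + n) f -> Arr n n' h -> Arr (l + m') (l + n') F ->
  (forall z, (z < l)%nat -> F z = bindT (f z) (sum l l idA h)) -> (i < m')%nat -> (j < m)%nat ->
  F (l + i)%nat = carry c (bindT (f (l + j)%nat) (sum l l idA h)) ->
  tr l F i = carry c (bindT (tr l f j) h).
Proof.
  intros Hf Hh HF Fz Hi Hj Fi. pose proof Hf as [Lf _]. set (x := f (l + j)%nat) in *.
  destruct (exits_or_diverges l f x) as [[y Hy]|D].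
  - rewrite (tr_exits _ _ _ _ Hy). apply tr_exits. rewrite Fi. apply exits_carry.
    eapply exits_ext; [intros z Hz; symmetry; apply Fz; auto|].
    apply exits_bindT with (n := n); auto; [apply Lf|intros; apply Lf]; lia.
  - rewrite bindT_sum_id_cont in Fi by apply (D O).
    assert (Same : forall t, run l F (F (l + i)%nat) (S t) = run l f x (S t)).
    { intros t. rewrite Fi, run_S, step_cont, label_carry by (rewrite cont_carry; apply (D O)).
      transitivity (run l F x (S t)); [rewrite run_S, step_cont by apply (D O); auto|].
      apply run_diverges_ext; auto. intros z Hz Cz. rewrite Fz, bindT_sum_id_cont; auto. }
    assert (D' : diverges l F (F (l + i)%nat)).
    { intros [|t]; [simpl; rewrite Fi, cont_carry; apply (D O)|rewrite Same; apply D]. }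
    rewrite (tr_diverges _ _ _ _ _ HF Hi D'), (tr_diverges _ _ _ _ _ Hf Hj D).
    rewrite bindT_verdict, carry_verdict.
    apply verdict_iff, bounded_below_close with (C := Rabs (weight (F (l + i)%nat) - weight x)).
    apply psum_close; auto.
Qed.

Lemma tr_naturality l m n m' n' f g h : Arr m' m g -> Arr (l + m) (l + n) f -> Arr n n' h ->
  eqA m' (tr l (comp (comp (sum l l idA g) f) (sum l l idA h))) (comp (comp g (tr l f)) h).
Proof.
  intros Hg Hf Hh i Hi. set (F := comp (comp (sum l l idA g) f) (sum l l idA h)).
  assert (HF : Arr (l + m') (l + n') F).
  { eapply comp_Arr; [eapply comp_Arr; [apply sum_Arr; [apply id_Arr|exact Hg]|exact Hf]|].
    apply sum_Arr; [apply id_Arr|exact Hh]. }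
  assert (Fz : forall z, (z < l)%nat -> F z = bindT (f z) (sum l l idA h)).
  { intros z Hz. unfold F. rewrite !comp_bindT, sum_lt by auto. reflexivity. }
  assert (Fi : F (l + i)%nat = bindT (bindT (g i) (fun j => f (l + j)%nat)) (sum l l idA h)).
  { unfold F. rewrite !comp_bindT, sum_ge, bindT_shiftT by lia.
    replace (l + i - l)%nat with i by lia. auto. }
  rewrite !comp_bindT. destruct Hg as [Lg _]. specialize (Lg i Hi).
  destruct (g i) as [j|r j| |] eqn:Eg; simpl in Fi |- *.
  - apply (tr_postcompose l m n m' n' f h F i j (Pt j)); auto.
  - rewrite bindT_add_weight in Fi |- *.
    apply (tr_postcompose l m n m' n' f h F i j (Wt r j)); auto.
  - apply tr_exits. rewrite Fi. apply (exits_now l F Ex). reflexivity.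
  - apply tr_exits. rewrite Fi. apply (exits_now l F Fa). reflexivity.
Qed.

Lemma exits_carry_inv l f c x y : exits l f (carry c x) y -> exists y0, exits l f x y0 /\ y = carry c y0.
Proof.
  intros W. inversion W as [x' C E|x' y' C W' E]; subst.
  - exists (unshiftT l x). rewrite cont_carry in C. split; [apply exits_now; auto|apply unshiftT_carry].
  - rewrite cont_carry in C. rewrite label_carry in W'.
    exists (carry x y'). split; [apply exits_later; auto|].
    apply carry_carry, (cont_labelled l); auto.
Qed.

Lemma exits_enter l f c y : labels_lt l c -> exits l f (bindT c f) y -> exits l f c y.
Proof.
  intros Lc W. destruct c as [z|s z| |]; simpl in Lc.
  - change y with (carry (Pt z) y). apply exits_later; auto. simpl; apply Nat.ltb_lt; auto.
  - change (exits l f (carry (Wt s z) (f z)) y) in W.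
    destruct (exits_carry_inv _ _ _ _ _ W) as [y0 [W0 ->]].
    apply exits_later; auto. simpl; apply Nat.ltb_lt; auto.
  - inversion W; subst; [apply (exits_now l f Ex); auto|discriminate].
  - inversion W; subst; [apply (exits_now l f Fa); auto|discriminate].
Qed.

Section Sliding.

Variables (l l' m n : nat) (f k : nat -> Tt nat).
Hypotheses (Hf : Arr (l + m) (l' + n) f) (Hk : Arr l' l k).

Local Notation K := (sum l' l k idA).
Local Notation A := (comp f K).
Local Notation B := (comp K f).

Lemma sliding_entry i : B (l' + i)%nat = f (l + i)%nat.
Proof. rewrite comp_bindT, sum_id_ge by lia. simpl. f_equal. lia. Qed.

Lemma exits_slide x y : exits l' B x y -> labels_lt (l' + n) x -> exits l A (bindT x K) y.
Proof.
  destruct Hf as [Lf _]. destruct Hk as [Lk _].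
  intros W; induction W as [x C|x y C W IH]; intros Lx.
  - destruct x as [z|s z| |]; simpl in C, Lx |- *; try (apply (exits_now l _ Ex); reflexivity);
      try (apply (exits_now l _ Fa); reflexivity); apply Nat.ltb_ge in C; rewrite sum_id_ge by lia.
    + replace (Pt (z - l')%nat) with (unshiftT l (Pt (l + (z - l'))%nat)) by (simpl; f_equal; lia).
      apply exits_now. simpl. apply Nat.ltb_ge; lia.
    + replace (Wt s (z - l')%nat) with (unshiftT l (Wt s (l + (z - l'))%nat)) by (simpl; f_equal; lia).
      apply exits_now. simpl. apply Nat.ltb_ge; lia.
  - pose proof (cont_label_lt _ _ C) as Hy.
    rewrite bindT_labelled, sum_lt by (auto; apply (cont_labelled l'); auto). apply exits_carry.
    rewrite comp_bindT, sum_lt in W, IH by auto.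
    apply exits_enter; [apply Lk; auto|]. rewrite bindT_assoc in IH.
    erewrite bindT_ext; [apply IH|apply Lk; auto|intros; apply comp_bindT].
    apply labels_lt_bindT with (l := l); [apply Lk; auto|intros; apply Lf; lia].
Qed.

Lemma sliding_step i N c phi : diverges l' B (B (l' + i)%nat) ->
  run l' B (B (l' + i)%nat) N = carry c phi ->
  labelled phi /\ labelled (k (label phi)) /\ (label (k (label phi)) < l)%nat /\
  bindT phi K = carry phi (k (label phi)) /\
  run l' B (B (l' + i)%nat) (S N) = carry (k (label phi)) (f (label (k (label phi)))).
Proof.
  intros D Hb. destruct Hk as [Lk _].
  pose proof (D N) as CB. rewrite Hb, cont_carry in CB.
  pose proof (cont_label_lt _ _ CB) as Hy. set (y := label phi) in *.
  assert (RB : run l' B (B (l' + i)%nat) (S N) = bindT (k y) f).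
  { rewrite run_S_cont, Hb, label_carry by (rewrite Hb, cont_carry; auto).
    rewrite comp_bindT, sum_lt; auto. }
  pose proof (D (S N)) as CB2. rewrite RB in CB2.
  assert (Pky : labelled (k y)) by (destruct (k y); simpl; auto; discriminate).
  split; [apply (cont_labelled l'); auto|split; [auto|split; [|split]]].
  - specialize (Lk y Hy). destruct (k y); simpl in *; tauto.
  - rewrite bindT_labelled, sum_lt by (auto; apply (cont_labelled l'); auto). auto.
  - rewrite RB, bindT_labelled by auto. auto.
Qed.

Lemma sliding_interleave i : diverges l' B (B (l' + i)%nat) -> forall N, exists phi,
  (phi = f (l + i)%nat \/ exists z, (z < l)%nat /\ phi = f z) /\
  run l A (A (l + i)%nat) N = bindT phi K /\ (exists c, run l' B (B (l' + i)%nat) N = carry c phi) /\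
  psum l' B (B (l' + i)%nat) (S N) = psum l A (A (l + i)%nat) N + weight phi.
Proof.
  intros D. induction N as [|N [phi [Hphi [Ha [[c Hb] Hp]]]]].
  - exists (f (l + i)%nat). rewrite sliding_entry, comp_bindT.
    split; auto. split; auto. split; [exists Ex; auto|].
    unfold psum; simpl. ring.
  - destruct (sliding_step i N c phi D Hb) as [Pphi [Pky [Hz [HK RB]]]].
    set (z := label (k (label phi))) in *.
    assert (CA : cont l (run l A (A (l + i)%nat) N) = true).
    { rewrite Ha, HK, cont_carry.
      destruct (k (label phi)); simpl in *; try tauto; apply Nat.ltb_lt; auto. }
    assert (RA : run l A (A (l + i)%nat) (S N) = bindT (f z) K).
    { rewrite run_S_cont, Ha, HK, label_carry by auto. apply comp_bindT. }
    exists (f z). split; [right; eauto|split; [exact RA|split; [exists (k (label phi)); exact RB|]]].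
    pose proof (D (S N)) as CB2. rewrite RB, cont_carry in CB2.
    rewrite psum_S, Hp, psum_S, Ha, HK, RB, !weight_carry
      by (auto; apply (cont_labelled l'); auto).
    ring.
Qed.

Lemma sliding_diverges i : diverges l' B (B (l' + i)%nat) -> diverges l A (A (l + i)%nat).
Proof.
  intros D N. destruct (sliding_interleave i D N) as [phi [_ [Ha [[c Hb] _]]]].
  destruct (sliding_step i N c phi D Hb) as [_ [Pky [Hz [HK _]]]].
  rewrite Ha, HK, cont_carry. destruct (k (label phi)); simpl in *; try tauto; apply Nat.ltb_lt; auto.
Qed.

Lemma tr_sliding_at i : (i < m)%nat -> tr l A i = tr l' B i.
Proof.
  intros Hi. pose proof Hf as [Lf _].
  assert (HA : Arr (l + m) (l + n) A)
    by (eapply comp_Arr; [exact Hf|apply sum_Arr; [exact Hk|apply id_Arr]]).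
  assert (HB : Arr (l' + m) (l' + n) B)
    by (eapply comp_Arr; [apply sum_Arr; [exact Hk|apply id_Arr]|exact Hf]).
  destruct (exits_or_diverges l' B (B (l' + i)%nat)) as [[y Hy]|D].
  - rewrite (tr_exits _ _ _ _ Hy). apply tr_exits. rewrite comp_bindT.
    apply exits_slide; [rewrite <- sliding_entry; auto|apply Lf; lia].
  - rewrite (tr_diverges _ _ _ _ _ HA Hi (sliding_diverges i D)), (tr_diverges _ _ _ _ _ HB Hi D).
    apply verdict_iff. rewrite <- (bounded_below_shift (psum l' B (B (l' + i)%nat)) 1).
    destruct (Rabs_bounded_prefix (fun z => weight (f z)) l) as [M HM].
    apply bounded_below_close with (C := Rmax (Rabs (weight (f (l + i)%nat))) M).
    intros N. destruct (sliding_interleave i D N) as [phi [Hphi [_ [_ Hp]]]]. simpl. rewrite Hp.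
    replace (psum l A (A (l + i)%nat) N - (psum l A (A (l + i)%nat) N + weight phi))
      with (- weight phi) by ring.
    rewrite Rabs_Ropp. destruct Hphi as [->|[z [Hz ->]]]; [apply Rmax_l|].
    eapply Rle_trans; [apply (HM z Hz)|apply Rmax_r].
Qed.

End Sliding.

Lemma tr_sliding l l' m n f k : Arr (l + m) (l' + n) f -> Arr l' l k ->
  eqA m (tr l (comp f (sum l' l k idA))) (tr l' (comp (sum l' l k idA) f)).
Proof. intros Hf Hk i Hi. apply (tr_sliding_at l l' m n); auto. Qed.

Lemma labelled_carry c x : labelled (carry c x) <-> labelled x.
Proof. destruct c, x; simpl; tauto. Qed.

Lemma labelled_unshiftT l x : labelled (unshiftT l x) <-> labelled x.
Proof. destruct x; simpl; tauto. Qed.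

Lemma cont_verdict l P : cont l (verdict P) = false.
Proof. unfold verdict. destruct (excluded_middle_informative P); reflexivity. Qed.

Lemma unshiftT_verdict l P : unshiftT l (verdict P) = verdict P.
Proof. unfold verdict. destruct (excluded_middle_informative P); reflexivity. Qed.

Lemma run_agree l L f x K : (l <= L)%nat -> (forall j, (j < K)%nat -> cont l (run l f x j) = true) ->
  forall j, (j <= K)%nat -> run L f x j = run l f x j.
Proof.
  intros HL Hc. induction j; intros Hj; simpl; auto. rewrite IHj by lia.
  assert (C : cont l (run l f x j) = true) by (apply Hc; lia).
  rewrite (step_cont l f), (step_cont L f); auto. apply (cont_mono l); auto.
Qed.

Lemma exits_last l f x y : exits l f x y -> exists K,
  (forall j, (j < K)%nat -> cont l (run l f x j) = true) /\ cont l (run l f x K) = false /\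
  (labelled y <-> labelled (run l f x K)) /\
  (labelled y -> label (run l f x K) = (l + label y)%nat /\ weight y = psum l f x (S K)).
Proof.
  intros W; induction W as [x C|x y C W [K [Hc [HK [Hlab Hw]]]]].
  - exists O. split; [intros; lia|split; [auto|split; [apply labelled_unshiftT|]]].
    intros P. apply labelled_unshiftT in P. unfold psum. simpl.
    destruct x; simpl in *; try tauto; apply Nat.ltb_ge in C; split; try lia; ring.
  - assert (Hs : forall j, run l f x (S j) = run l f (f (label x)) j)
      by (intros; rewrite run_S, step_cont; auto).
    exists (S K). rewrite !Hs. split; [intros [|j] Hj; [auto|rewrite Hs; apply Hc; lia]|].
    split; [auto|split; [rewrite labelled_carry; auto|]].
    intros P. apply labelled_carry in P. destruct (Hw P) as [Hl Hwy].
    rewrite label_carry, weight_carry, psum_cons, step_cont, Hwy by auto. auto.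
Qed.

Lemma exits_mono l L f x Y : (l <= L)%nat -> exits L f x Y -> exists y, exits l f x y.
Proof.
  intros HL W. induction W as [x C|x Y C W [y IH]].
  - eexists; apply exits_now. destruct (cont l x) eqn:E; auto. rewrite (cont_mono l L) in C; auto.
  - destruct (cont l x) eqn:E; eexists; [apply exits_later; eauto|apply exits_now; auto].
Qed.

(* The run of [tr l f] through the last [l'] wires replays the run of [f] through all [l + l'] wires,
   each of its steps being a complete run of [f] through the first [l] wires. *)
Lemma exits_vanishing l l' f x Y :
  exits (l + l') f x Y -> forall y, exits l f x y -> exits l' (tr l f) y Y.
Proof.
  intros W. induction W as [x C|x Y C W IH]; intros y Wy.
  - assert (Cl : cont l x = false).
    { destruct (cont l x) eqn:E; auto. rewrite (cont_mono l (l + l')) in C; auto; lia. }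
    inversion Wy; subst; [|congruence].
    replace (unshiftT (l + l') x) with (unshiftT l' (unshiftT l x))
      by (destruct x; simpl; auto; f_equal; lia).
    apply exits_now. destruct x; simpl in *; auto; apply Nat.ltb_ge in C; apply Nat.ltb_ge; lia.
  - destruct (cont l x) eqn:Cl; inversion Wy; subst; try congruence.
    + apply exits_carry. auto.
    + pose proof (cont_label_lt _ _ C) as Hx. pose proof (cont_labelled _ _ C) as Px.
      assert (Hxl : (l <= label x)%nat).
      { destruct x; simpl in *; try contradiction; apply Nat.ltb_ge in Cl; lia. }
      destruct (exits_mono l (l + l') f _ _ ltac:(lia) W) as [y1 W1].
      replace (carry x Y) with (carry (unshiftT l x) Y) by (destruct x; reflexivity).
      apply exits_later; [destruct x; simpl in *; try contradiction; apply Nat.ltb_lt; lia|].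
      replace (tr l f (label (unshiftT l x))) with y1; [auto|].
      symmetry. apply tr_exits. replace (l + label (unshiftT l x))%nat with (label x); auto.
      destruct x; simpl in *; try contradiction; lia.
Qed.

Section Vanishing.

Variables (l l' m n i : nat) (f : nat -> Tt nat).
Hypotheses (Hf : Arr (l + l' + m) (l + l' + n) f) (Hi : (i < m)%nat).

Local Notation L := (l + l')%nat.
Local Notation g := (tr l f).
Local Notation e0 := (f (l + l' + i)%nat).

Lemma Arr_inner : Arr (l + (l' + m)) (l + (l' + n)) f.
Proof. rewrite !Nat.add_assoc. exact Hf. Qed.

Lemma e0_inner : f (l + (l' + i))%nat = e0.
Proof. rewrite Nat.add_assoc. auto. Qed.

(* From an entry [f (l + u)] of a diverging run through all [l + l'] wires, the run through the
   first [l] wires either diverges as well, and [g u] gets the verdict of the whole run, or it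
   stops and completes one step of the run of [g]. *)
Lemma vanishing_inner u p : diverges L f e0 -> (u < l' + m)%nat -> run L f e0 p = f (l + u)%nat ->
  g u = tr L f i \/
  (cont l' (g u) = true /\ exists K, run L f e0 (p + S K) = f (l + label (g u))%nat /\
     psum L f e0 (p + S K) = psum L f e0 p + weight (g u)).
Proof.
  intros D Hu Ep. set (x := f (l + u)%nat) in *.
  destruct (exits_or_diverges l f x) as [[o Ho]|Du].
  - right. rewrite (tr_exits _ _ _ _ Ho). destruct (exits_last _ _ _ _ Ho) as [K [Hc [HK [Hlab Hw]]]].
    assert (Agree : forall j, (j <= K)%nat -> run L f x j = run l f x j) by (apply run_agree; auto; lia).
    pose proof (D (p + K)%nat) as CK. rewrite run_add, Ep, Agree in CK by lia.
    assert (Po : labelled o) by (apply Hlab, (cont_labelled L); auto).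
    destruct (Hw Po) as [Hl Hwo]. pose proof (cont_label_lt _ _ CK) as Hlt. rewrite Hl in Hlt.
    split; [destruct o; simpl in *; try tauto; apply Nat.ltb_lt; lia|].
    exists K. split.
    + rewrite Nat.add_succ_r, run_S_cont, run_add, Ep, Agree, Hl
        by (rewrite ?run_add, ?Ep, ?Agree; auto).
      auto.
    + rewrite psum_add, Ep, Hwo. f_equal. apply rsum_ext. intros j Hj. rewrite Agree by lia. auto.
  - left. rewrite (tr_diverges _ _ _ _ _ Arr_inner Hu Du), (tr_diverges _ _ _ _ _ Hf Hi D).
    apply verdict_iff.
    assert (Agree : forall t, run L f x t = run l f x t)
      by (intros; apply (run_agree l L f x t); auto; lia).
    rewrite <- (bounded_below_shift (psum L f e0) p).
    apply bounded_below_close with (C := Rabs (psum L f e0 p)). intros N.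
    assert (E : psum L f x N = psum l f x N) by (apply rsum_ext; intros; rewrite Agree; auto).
    rewrite psum_add, Ep. fold x. rewrite E, Rabs_minus_sym.
    replace (psum L f e0 p + psum l f x N - psum l f x N) with (psum L f e0 p) by ring. apply Rle_refl.
Qed.

Lemma vanishing_outer_exits : diverges L f e0 -> forall o Y, exits l' g o Y ->
  forall u p, (u < l' + m)%nat -> o = g u -> run L f e0 p = f (l + u)%nat -> Y = tr L f i.
Proof.
  intros D. pose proof (tr_diverges _ _ _ _ _ Hf Hi D) as HV.
  intros o Y W. induction W as [o C|o Y C W IH]; intros u p Hu -> Ep.
  - destruct (vanishing_inner u p D Hu Ep) as [E|[C' _]]; [|congruence].
    rewrite E, HV, unshiftT_verdict. auto.
  - destruct (vanishing_inner u p D Hu Ep) as [E|[_ [K [EK _]]]].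
    + rewrite E, HV, cont_verdict in C. discriminate.
    + rewrite (IH (label (g u)) (p + S K)%nat); auto; [|pose proof (cont_label_lt _ _ C); lia].
      rewrite HV. apply carry_verdict.
Qed.

Lemma vanishing_outer_diverges : diverges L f e0 -> diverges l' g (g (l' + i)%nat) ->
  forall N, exists u p, (N <= p)%nat /\ (u < l' + m)%nat /\ run l' g (g (l' + i)%nat) N = g u /\
    run L f e0 p = f (l + u)%nat /\ psum l' g (g (l' + i)%nat) N = psum L f e0 p.
Proof.
  intros D Dg. pose proof (tr_diverges _ _ _ _ _ Hf Hi D) as HV.
  induction N as [|N [u [p [Hp [Hu [Eo [Ep EP]]]]]]].
  - exists (l' + i)%nat, O. repeat split; auto; [lia|]. simpl. symmetry. apply e0_inner.
  - pose proof (Dg N) as C. rewrite Eo in C.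
    destruct (vanishing_inner u p D Hu Ep) as [E|[_ [K [EK EPK]]]].
    + rewrite E, HV, cont_verdict in C. discriminate.
    + exists (label (g u)), (p + S K)%nat. split; [lia|split; [pose proof (cont_label_lt _ _ C); lia|]].
      split; [rewrite run_S_cont, Eo; auto; rewrite Eo; auto|split; auto].
      rewrite psum_S, EP, Eo, EPK. auto.
Qed.

Lemma tr_vanishing_at : tr L f i = tr l' g i.
Proof.
  pose proof (tr_Arr _ _ _ _ Arr_inner) as Hg.
  destruct (exits_or_diverges L f e0) as [[Y HY]|D].
  - destruct (exits_mono l L f _ _ ltac:(lia) HY) as [y Hy].
    rewrite (tr_exits _ _ _ _ HY). symmetry. apply tr_exits.
    replace (g (l' + i)%nat) with y; [eapply exits_vanishing; eauto|].
    symmetry. apply tr_exits. rewrite e0_inner. auto.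
  - destruct (exits_or_diverges l' g (g (l' + i)%nat)) as [[Y HY]|Dg].
    + rewrite (tr_exits _ _ _ _ HY). symmetry.
      apply (vanishing_outer_exits D _ _ HY (l' + i)%nat O); auto; [lia|].
      simpl. symmetry. apply e0_inner.
    + rewrite (tr_diverges _ _ _ _ _ Hf Hi D), (tr_diverges _ _ _ _ _ Hg Hi Dg). apply verdict_iff.
      destruct (psum_diverges_drift _ _ _ _ _ Hf Hi D) as [p0 [q [s Hdrift]]].
      apply (bounded_below_cofinal _ _ _ _ _ Hdrift). intros N.
      destruct (vanishing_outer_diverges D Dg N) as [u [p [Hp [_ [_ [_ EP]]]]]]. eauto.
Qed.

End Vanishing.

Lemma tr_vanishing_add l l' m n f : Arr (l + l' + m) (l + l' + n) f ->
  eqA m (tr (l + l') f) (tr l' (tr l f)).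
Proof. intros Hf i Hi. apply (tr_vanishing_at l l' m n); auto. Qed.

Theorem proposition4p3 : traced_symmetric_monoidal.
Proof.
  split; [exact well_defined_ops_hold|].
  split; [exact category_axioms_hold|].
  split; [exact monoidal_axioms_hold|].
  split; [exact symmetry_axioms_hold|].
  repeat split.
  - exact tr_naturality.
  - exact tr_sliding.
  - exact tr_vanishing0.
  - exact tr_vanishing_add.
  - exact tr_superposing.
  - exact tr_yanking.
Qed.
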